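(* Let $n\ge 2$, $0\le d\le n-1$, and let $\mathbf{P}=(P_1,\dots,P_{n+1})$ be a Roy-system of dimension $n+1$ on $[Q_0,\infty)$. Then \[\underline{\delta}(\mathbf{P})\le d+(n+1)\liminf_{q\to\infty}\frac{P_1(q)+\cdots+P_{n-d}(q)}{q}.\]
   Context: A Roy-system of dimension $n+1$ on an interval $I\subset[0,\infty)$ with nonempty interior is a continuous piecewise linear map $\mathbf{P}=(P_1,\dots,P_{n+1}):I\to\mathbb{R}^{n+1}$ such that: (S1) for each $q\in I$, $0\le P_1(q)\le\cdots\le P_{n+1}(q)$ and $P_1(q)+\cdots+P_{n+1}(q)=q$; (S2) on every nonempty open subinterval $H$ of $I$ where $\mathbf{P}$ is differentiable, there are integers $1\le\underline r\le\bar r\le n+1$ such that $P_{\underline r},\dots,P_{\bar r}$ coincide on $H$ and have slope $1/(\bar r-\underline r+1)$, while every other component is constant on $H$; (S3) if $q$ is an interior point of $I$ where $\mathbf{P}$ is not differentiable, and $\underline r,\bar r,\underline s,\bar s$ are the integers with $P_j'(q^-)=1/(\bar r-\underline r+1)$ for $\underline r\le j\le\bar r$ and $P_j'(q^+)=1/(\bar s-\underline s+1)$ for $\underline s\le j\le\bar s$, and if $\underline r<\bar s$, then $P_{\underline r}(q)=P_{\underline r+1}(q)=\cdots=P_{\bar s}(q)$. The local contraction rate at a point $q$ where $\mathbf{P}$ is differentiable is $\delta(\mathbf{P},q)=n+1-\kappa$, where $\kappa=\min\{k:P_k'(q)>0\}$. The average contraction rate is $\Delta(\mathbf{P},Q)=\frac{1}{Q-Q_0}\int_{Q_0}^{Q}\delta(\mathbf{P},q)\,dq$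 for $Q>Q_0$, and the lower average contraction rate is $\underline{\delta}(\mathbf{P})=\liminf_{Q\to\infty}\Delta(\mathbf{P},Q)$. *)

From Stdlib Require Import Reals Lra ClassicalEpsilon.
Open Scope R_scope.

(* Components of P are indexed by j = 1, ..., n+1 (values at other indices
   are irrelevant). A map P : I -> R^(n+1) is represented as P : nat -> R -> R;
   its values outside I = [Q0, oo) are irrelevant. *)

Fixpoint sumP (P : nat -> R -> R) (m : nat) (q : R) : R :=
  match m with
  | O => 0
  | S k => sumP P k q + P (S k) q
  end.

Definition P_diff (n : nat) (P : nat -> R -> R) (q : R) : Prop :=
  forall j, (1 <= j <= S n)%nat -> exists l, derivable_pt_lim (P j) q l.

Definition left_deriv (f : R -> R) (q l : R) : Prop :=
  forall eps, 0 < eps -> exists delta, 0 < delta /\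
    forall h, - delta < h < 0 -> Rabs ((f (q + h) - f q) / h - l) < eps.
Definition right_deriv (f : R -> R) (q l : R) : Prop :=
  forall eps, 0 < eps -> exists delta, 0 < delta /\
    forall h, 0 < h < delta -> Rabs ((f (q + h) - f q) / h - l) < eps.

(* continuous piecewise linear on [Q0, oo): a locally finite subdivision
   Q0 = t_0 < t_1 < ... (unbounded) with every component affine on each
   closed piece [t_k, t_{k+1}] (this also gives continuity on I). *)
Definition piecewise_linear (n : nat) (Q0 : R) (P : nat -> R -> R) : Prop :=
  exists t : nat -> R,
    t O = Q0 /\ (forall k, t k < t (S k)) /\ (forall M, exists k, M <= t k) /\
    forall j k, (1 <= j <= S n)%nat -> exists a b, forall q,
      t k <= q <= t (S k) -> P j q = a * q + b.

Definition roy_S1 (n : nat) (Q0 : R) (P : nat -> R -> R) : Prop :=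
  forall q, Q0 <= q ->
    0 <= P 1%nat q /\
    (forall j, (1 <= j <= n)%nat -> P j q <= P (S j) q) /\
    sumP P (S n) q = q.

Definition roy_S2 (n : nat) (Q0 : R) (P : nat -> R -> R) : Prop :=
  forall a b, Q0 <= a -> a < b ->
    (forall q, a < q < b -> P_diff n P q) ->
    exists rlo rhi : nat, (1 <= rlo)%nat /\ (rlo <= rhi)%nat /\ (rhi <= S n)%nat /\
      (forall j, (rlo <= j <= rhi)%nat -> forall q, a < q < b ->
          P j q = P rlo q /\
          derivable_pt_lim (P j) q (1 / INR (rhi - rlo + 1))) /\
      (forall j, (1 <= j <= S n)%nat -> ~ (rlo <= j <= rhi)%nat ->
          forall q q', a < q < b -> a < q' < b -> P j q = P j q').

Definition roy_S3 (n : nat) (Q0 : R) (P : nat -> R -> R) : Prop :=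
  forall q, Q0 < q -> ~ P_diff n P q ->
    forall rlo rhi slo shi : nat,
      (1 <= rlo)%nat -> (rlo <= rhi)%nat -> (rhi <= S n)%nat ->
      (1 <= slo)%nat -> (slo <= shi)%nat -> (shi <= S n)%nat ->
      (forall j, (1 <= j <= S n)%nat ->
         left_deriv (P j) q
           (if ((rlo <=? j) && (j <=? rhi))%bool then 1 / INR (rhi - rlo + 1) else 0)) ->
      (forall j, (1 <= j <= S n)%nat ->
         right_deriv (P j) q
           (if ((slo <=? j) && (j <=? shi))%bool then 1 / INR (shi - slo + 1) else 0)) ->
      (rlo < shi)%nat ->
      forall j, (rlo <= j <= shi)%nat -> P j q = P rlo q.

Definition Roy_system (n : nat) (Q0 : R) (P : nat -> R -> R) : Prop :=
  0 <= Q0 /\ piecewise_linear n Q0 P /\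
  roy_S1 n Q0 P /\ roy_S2 n Q0 P /\ roy_S3 n Q0 P.

(* the derivative P_j'(q) (meaningful where it exists) *)
Definition deriv_at (f : R -> R) (q : R) : R :=
  epsilon (inhabits 0) (fun l => derivable_pt_lim f q l).

Fixpoint first_pos (f : nat -> R) (start fuel : nat) : nat :=
  match fuel with
  | O => start
  | S m => if Rlt_dec 0 (f start) then start else first_pos f (S start) m
  end.

Definition kappa (n : nat) (P : nat -> R -> R) (q : R) : nat :=
  first_pos (fun k => deriv_at (P k) q) 1 (S n).

(* local contraction rate delta(P,q) = n+1-kappa where P is differentiable
   (value 0 at the non-differentiability points, which are isolated and do
   not affect the integral) *)
Definition local_rate (n : nat) (P : nat -> R -> R) (q : R) : R :=
  match excluded_middle_informative (P_diff n P q) with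
  | left _ => INR (S n) - INR (kappa n P q)
  | right _ => 0
  end.

(* Riemann integral of f over [a,b] (0 if f is not Riemann integrable) *)
Definition integral (f : R -> R) (a b : R) : R :=
  match excluded_middle_informative (exists pr : Riemann_integrable f a b, True) with
  | left H => RiemannInt (proj1_sig (constructive_indefinite_description _ H))
  | right _ => 0
  end.

Definition avg_rate (n : nat) (Q0 : R) (P : nat -> R -> R) (Q : R) : R :=
  integral (local_rate n P) Q0 Q / (Q - Q0).

Definition is_liminf_infty (f : R -> R) (L : R) : Prop :=
  (forall eps, 0 < eps -> exists M, forall x, M <= x -> L - eps < f x) /\
  (forall eps, 0 < eps -> forall M, exists x, M <= x /\ f x < L + eps).

From Stdlib Require Import Reals Lra Lia Psatz ClassicalEpsilon.
Open Scope R_scope.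

(* On every piece (a, b) of the subdivision where P is affine,
   axiom (S2) forces the slopes to follow the Roy pattern: the components
   P_rlo, ..., P_rhi grow with slope 1/(rhi - rlo + 1) and all others are
   constant.  There the local contraction rate is n + 1 - rlo, while the
   partial sum P_1 + ... + P_{n-d} grows with a slope s satisfying the purely
   combinatorial inequality  n + 1 - rlo <= d + (n + 1) s.  Integrating this
   piece by piece from Q0 gives
     int_{Q0}^{Q} delta(P, q) dq <= d (Q - Q0) + (n + 1) (P_1 + ... + P_{n-d})(Q),
   hence  Delta(P, Q) <= d + (n + 1) (P_1 + ... + P_{n-d})(Q) / (Q - Q0).
   Since 0 <= P_1 + ... + P_{n-d} <= q by (S1), replacing Q - Q0 by Q costs
   an error tending to 0, and taking lower limits yields the theorem. *)

Lemma affine_deriv (f : R -> R) (a b al be q : R) :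
  a < q < b -> (forall y, a < y < b -> f y = al * y + be) ->
  derivable_pt_lim f q al.
Proof.
  intros Hq Hf eps Heps.
  assert (Hdelta : 0 < Rmin (q - a) (b - q)) by (apply Rmin_pos; lra).
  exists (mkposreal _ Hdelta). intros h Hh0 Hh; simpl in Hh.
  pose proof (Rmin_l (q - a) (b - q)). pose proof (Rmin_r (q - a) (b - q)).
  pose proof (Rabs_def2 _ _ Hh).
  rewrite (Hf (q + h)), (Hf q) by lra.
  replace ((al * (q + h) + be - (al * q + be)) / h - al) with 0 by (field; auto).
  rewrite Rabs_R0; lra.
Qed.

Lemma deriv_at_eq (f : R -> R) (q l : R) :
  derivable_pt_lim f q l -> deriv_at f q = l.
Proof.
  intros H. unfold deriv_at.
  pose proof (epsilon_spec (inhabits 0) (fun l => derivable_pt_lim f q l)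
                (ex_intro _ l H)) as Hspec.
  exact (uniqueness_limite _ _ _ _ Hspec H).
Qed.

Lemma first_pos_eq (f : nat -> R) (r : nat) : forall fuel start,
  (start <= r < start + fuel)%nat ->
  (forall j, (start <= j < r)%nat -> ~ 0 < f j) -> 0 < f r ->
  first_pos f start fuel = r.
Proof.
  induction fuel as [|m IH]; intros start Hr Hbefore Hpos; [lia|].
  simpl. destruct (Rlt_dec 0 (f start)) as [Hstart|Hstart].
  - destruct (Nat.eq_dec start r) as [->|Hne]; [reflexivity|].
    exfalso. apply (Hbefore start); [lia | exact Hstart].
  - destruct (Nat.eq_dec start r) as [->|Hne]; [contradiction|].
    apply IH; [lia | | exact Hpos]. intros j Hj; apply Hbefore; lia.
Qed.

(* The slope of P_j on a piece where P_rlo, ..., P_rhi move together. *)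
Definition unit_slope (rlo rhi j : nat) : R :=
  if ((rlo <=? j) && (j <=? rhi))%bool then 1 / INR (rhi - rlo + 1) else 0.

Definition slope_sum (rlo rhi m : nat) : R :=
  sumP (fun j _ => unit_slope rlo rhi j) m 0.

Lemma sumP_increment (P : nat -> R -> R) (e : nat -> R) (x a : R) : forall m,
  (forall j, (1 <= j <= m)%nat -> P j x - P j a = e j * (x - a)) ->
  sumP P m x - sumP P m a = (x - a) * sumP (fun j _ => e j) m 0.
Proof.
  induction m as [|m IH]; intros Hinc; simpl; [lra|].
  pose proof (Hinc (S m) ltac:(lia)).
  pose proof (IH ltac:(intros j Hj; apply Hinc; lia)). nra.
Qed.

Lemma slope_sum_count (rlo rhi : nat) : (1 <= rlo <= rhi)%nat -> forall m,
  slope_sum rlo rhi m * INR (rhi - rlo + 1) = INR (Nat.min m rhi - (rlo - 1)).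
Proof.
  intros Hr. unfold slope_sum, unit_slope.
  assert (Hc : 0 < INR (rhi - rlo + 1)) by (apply lt_0_INR; lia).
  induction m as [|m IH]; cbn [sumP]; [simpl; lra|].
  rewrite Rmult_plus_distr_r, IH.
  destruct (Nat.leb_spec rlo (S m)); destruct (Nat.leb_spec (S m) rhi); cbn [andb].
  - replace (Nat.min (S m) rhi - (rlo - 1))%nat
      with (S (Nat.min m rhi - (rlo - 1))) by lia.
    rewrite S_INR. field. lra.
  - replace (Nat.min (S m) rhi - (rlo - 1))%nat
      with (Nat.min m rhi - (rlo - 1))%nat by lia. lra.
  - replace (Nat.min (S m) rhi - (rlo - 1))%nat
      with (Nat.min m rhi - (rlo - 1))%nat by lia. lra.
  - lia.
Qed.

Lemma rate_le_slope_sum (n d rlo rhi : nat) :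
  (1 <= rlo <= rhi)%nat -> (rhi <= S n)%nat ->
  INR (S n) - INR rlo <= INR d + INR (S n) * slope_sum rlo rhi (n - d).
Proof.
  intros Hr Hrhi.
  pose proof (slope_sum_count rlo rhi Hr (n - d)) as Hcount.
  assert (Hnat : (S n * (rhi - rlo + 1) <= (rlo + d) * (rhi - rlo + 1)
                   + S n * (Nat.min (n - d) rhi - (rlo - 1)))%nat).
  { destruct (Nat.le_gt_cases rlo (n - d)); [destruct (Nat.le_gt_cases rhi (n - d))|].
    - replace (Nat.min (n - d) rhi - (rlo - 1))%nat with (rhi - rlo + 1)%nat by lia.
      nia.
    - replace (Nat.min (n - d) rhi - (rlo - 1))%nat with (n - d - rlo + 1)%nat by lia.
      assert (rhi - rlo + 1 <= S n)%nat by lia.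
      assert (S n <= rlo + d + (n - d - rlo + 1))%nat by lia. nia.
    - replace (Nat.min (n - d) rhi - (rlo - 1))%nat with 0%nat by lia.
      assert (S n <= rlo + d)%nat by lia. nia. }
  assert (Hc : 0 < INR (rhi - rlo + 1)) by (apply lt_0_INR; lia).
  apply le_INR in Hnat. rewrite plus_INR, !mult_INR, (plus_INR rlo d) in Hnat.
  rewrite <- Hcount in Hnat.
  apply (Rmult_le_reg_r (INR (rhi - rlo + 1))); [exact Hc | nra].
Qed.

Definition affine_on (n : nat) (P : nat -> R -> R) (a b : R) : Prop :=
  forall j, (1 <= j <= S n)%nat -> exists al be, forall q,
    a <= q <= b -> P j q = al * q + be.

Section Piece.
Variables (n : nat) (Q0 a b : R) (P : nat -> R -> R).
Hypotheses (HS2 : roy_S2 n Q0 P) (Ha : Q0 <= a) (Hab : a < b)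
  (Haff : affine_on n P a b).

Lemma piece_slopes : exists rlo rhi : nat,
  (1 <= rlo <= rhi)%nat /\ (rhi <= S n)%nat /\
  forall j, (1 <= j <= S n)%nat -> forall q, a <= q <= b ->
    P j q = P j a + unit_slope rlo rhi j * (q - a).
Proof.
  assert (Hdiff : forall q, a < q < b -> P_diff n P q).
  { intros q Hq j Hj. destruct (Haff j Hj) as (al & be & Hf).
    exists al. apply (affine_deriv _ a b al be); [lra | intros y Hy; apply Hf; lra]. }
  destruct (HS2 a b Ha Hab Hdiff) as (rlo & rhi & H1 & H2 & H3 & Hmoving & Hfixed).
  exists rlo, rhi. split; [lia|]. split; [exact H3|].
  intros j Hj q Hq. destruct (Haff j Hj) as (al & be & Hf).
  set (mid := (a + b) / 2).
  assert (Hslope : al = unit_slope rlo rhi j).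
  { assert (Hconst : ~ (rlo <= j <= rhi)%nat -> al = 0).
    { intros Hout.
      pose proof (Hfixed j Hj Hout mid ((a + 3 * b) / 4)
                    ltac:(unfold mid; lra) ltac:(lra)) as Heq.
      rewrite !Hf in Heq by (unfold mid; lra).
      assert (Hprod : al * (mid - (a + 3 * b) / 4) = 0) by lra.
      apply Rmult_integral in Hprod. unfold mid in Hprod. destruct Hprod; [auto | lra]. }
    unfold unit_slope.
    destruct (Nat.leb_spec rlo j); destruct (Nat.leb_spec j rhi); cbn [andb];
      try (apply Hconst; lia).
    apply (uniqueness_limite (P j) mid).
    - apply (affine_deriv _ a b al be); [unfold mid; lra | intros; apply Hf; lra].
    - apply Hmoving; [lia | unfold mid; lra]. }
  rewrite (Hf q), (Hf a), <- Hslope by lra. ring.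
Qed.

Lemma piece_bound (d : nat) : exists s,
  (forall y, a < y < b -> local_rate n P y <= INR d + INR (S n) * s) /\
  (forall x, a <= x <= b ->
     sumP P (n - d) x - sumP P (n - d) a = (x - a) * s).
Proof.
  destruct piece_slopes as (rlo & rhi & Hr & Hrhi & Hpat).
  exists (slope_sum rlo rhi (n - d)). split.
  - intros y Hy.
    assert (Hder : forall j, (1 <= j <= S n)%nat ->
               derivable_pt_lim (P j) y (unit_slope rlo rhi j)).
    { intros j Hj.
      apply (affine_deriv _ a b _ (P j a - unit_slope rlo rhi j * a)); [lra|].
      intros q Hq. rewrite (Hpat j Hj q) by lra. ring. }
    assert (Hkappa : kappa n P y = rlo).
    { unfold kappa. apply first_pos_eq; [lia | |].
      - intros j Hj. rewrite (deriv_at_eq _ _ _ (Hder j ltac:(lia))).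
        unfold unit_slope. destruct (Nat.leb_spec rlo j); [lia|]. cbn [andb]. lra.
      - rewrite (deriv_at_eq _ _ _ (Hder rlo ltac:(lia))). unfold unit_slope.
        rewrite (proj2 (Nat.leb_le rlo rlo)), (proj2 (Nat.leb_le rlo rhi)) by lia.
        cbn [andb]. apply Rdiv_lt_0_compat; [lra | apply lt_0_INR; lia]. }
    unfold local_rate.
    destruct (excluded_middle_informative (P_diff n P y)) as [_|Hnot].
    + rewrite Hkappa. apply rate_le_slope_sum; assumption.
    + exfalso. apply Hnot. intros j Hj. eexists. exact (Hder j Hj).
  - intros x Hx. apply sumP_increment. intros j Hj.
    rewrite (Hpat j ltac:(lia) x Hx). ring.
Qed.

End Piece.

Section RoySystem.
Variables (n : nat) (Q0 : R) (P : nat -> R -> R).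
Hypothesis HS1 : roy_S1 n Q0 P.

Lemma component_nonneg (q : R) : Q0 <= q ->
  forall j, (1 <= j <= S n)%nat -> 0 <= P j q.
Proof.
  intros Hq. destruct (HS1 q Hq) as (H0 & Hmono & _).
  induction j as [|j IH]; intros Hj; [lia|].
  destruct j as [|j]; [exact H0|].
  specialize (Hmono (S j) ltac:(lia)). specialize (IH ltac:(lia)). lra.
Qed.

Lemma sumP_bounds (q : R) (m : nat) : Q0 <= q -> (m <= S n)%nat ->
  0 <= sumP P m q <= q.
Proof.
  intros Hq Hm.
  assert (Hgrow : forall m' k, (m' + k <= S n)%nat -> sumP P m' q <= sumP P (m' + k) q).
  { intros m'. induction k as [|k IH]; intros Hk; [rewrite Nat.add_0_r; lra|].
    rewrite Nat.add_succ_r. cbn [sumP].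
    pose proof (component_nonneg q Hq (S (m' + k)) ltac:(lia)).
    specialize (IH ltac:(lia)). lra. }
  destruct (HS1 q Hq) as (_ & _ & Htotal). split.
  - exact (Hgrow O m Hm).
  - pose proof (Hgrow m (S n - m)%nat ltac:(lia)) as Hle.
    replace (m + (S n - m))%nat with (S n) in Hle by lia. lra.
Qed.

End RoySystem.

Section Integral.
Variables (n d : nat) (Q0 : R) (P : nat -> R -> R) (t : nat -> R).
Hypotheses (HS2 : roy_S2 n Q0 P) (Ht0 : t O = Q0) (Htinc : forall k, t k < t (S k))
  (Hpieces : forall k, affine_on n P (t k) (t (S k))).

Lemma subdivision_ge (k : nat) : Q0 <= t k.
Proof. induction k; [rewrite Ht0; lra|]. pose proof (Htinc k); lra. Qed.

Lemma integral_bound : forall k x, Q0 <= x <= t k ->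
  forall pr : Riemann_integrable (local_rate n P) Q0 x,
  RiemannInt pr <= INR d * (x - Q0) + INR (S n) * (sumP P (n - d) x - sumP P (n - d) Q0).
Proof.
  induction k as [|k IHk]; intros x Hx pr.
  - rewrite Ht0 in Hx. assert (x = Q0) by lra. subst x.
    rewrite RiemannInt_P9. lra.
  - destruct (Rle_dec x (t k)) as [Hle|Hgt]; [apply IHk; lra|].
    assert (Hmid : Q0 <= t k <= x) by (pose proof (subdivision_ge k); lra).
    pose proof (RiemannInt_P22 pr Hmid) as pr1.
    pose proof (RiemannInt_P23 pr Hmid) as pr2.
    rewrite <- (RiemannInt_P26 pr1 pr2 pr).
    destruct (piece_bound n Q0 (t k) (t (S k)) P HS2 (subdivision_ge k) (Htinc k)
                (Hpieces k) d) as (s & Hrate & Hsum).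
    assert (Hlast : RiemannInt pr2 <= INR d * (x - t k) + INR (S n) * s * (x - t k)).
    { replace (INR d * (x - t k) + INR (S n) * s * (x - t k))
        with (RiemannInt (RiemannInt_P14 (t k) x (INR d + INR (S n) * s)))
        by (rewrite RiemannInt_P15; ring).
      apply RiemannInt_P19; [lra|]. intros y Hy. unfold fct_cte. apply Hrate; lra. }
    pose proof (IHk (t k) (conj (proj1 Hmid) (Rle_refl _)) pr1).
    pose proof (Hsum x ltac:(lra)). nra.
Qed.

End Integral.

Lemma avg_rate_bound (n d : nat) (Q0 Q : R) (P : nat -> R -> R) :
  Roy_system n Q0 P -> Q0 < Q ->
  avg_rate n Q0 P Q <= INR d + INR (S n) * (sumP P (n - d) Q / (Q - Q0)).
Proof.
  intros (HQ0 & (t & Ht0 & Htinc & Hunb & Hpw) & HS1 & HS2 & _) HQ.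
  pose proof (sumP_bounds n Q0 P HS1 Q (n - d) ltac:(lra) ltac:(lia)).
  pose proof (sumP_bounds n Q0 P HS1 Q0 (n - d) ltac:(lra) ltac:(lia)).
  pose proof (pos_INR (S n)). pose proof (pos_INR d).
  replace (INR d + INR (S n) * (sumP P (n - d) Q / (Q - Q0)))
    with ((INR d * (Q - Q0) + INR (S n) * sumP P (n - d) Q) / (Q - Q0)) by (field; lra).
  unfold avg_rate. apply Rmult_le_compat_r; [left; apply Rinv_0_lt_compat; lra|].
  unfold integral. destruct (excluded_middle_informative _) as [Hint|_]; [|nra].
  destruct (Hunb Q) as [k Hk].
  set (pr := proj1_sig (constructive_indefinite_description _ Hint)).
  pose proof (integral_bound n d Q0 P t HS2 Ht0 Htinc
                (fun k j Hj => Hpw j k Hj) k Q ltac:(lra) pr). nra.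
Qed.

Lemma div_nonneg (x y : R) : 0 <= x -> 0 < y -> 0 <= x / y.
Proof. intros Hx Hy. apply Rmult_le_pos; [exact Hx | left; apply Rinv_0_lt_compat, Hy]. Qed.

Lemma ratio_shift (S Q Q0 : R) : 0 <= S <= Q -> 0 <= Q0 < Q ->
  S / (Q - Q0) <= S / Q + Q0 / (Q - Q0).
Proof.
  intros HS HQ.
  replace (S / (Q - Q0)) with (S / Q + (S / Q) * (Q0 / (Q - Q0))) by (field; lra).
  assert (S / Q <= 1).
  { apply (Rmult_le_reg_r Q); [lra|]. unfold Rdiv.
    rewrite Rmult_assoc, Rinv_l by lra. lra. }
  assert (0 <= S / Q) by (apply div_nonneg; lra).
  assert (0 <= Q0 / (Q - Q0)) by (apply div_nonneg; lra).
  nra.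
Qed.

Lemma shift_error_small (Q0 Q eps : R) : 0 <= Q0 -> 0 < eps ->
  Q0 + 1 + Q0 / eps <= Q -> Q0 / (Q - Q0) < eps.
Proof.
  intros HQ0 Heps HQ.
  assert (0 <= Q0 / eps) by (apply div_nonneg; lra).
  assert (eps * (Q0 / eps) = Q0) by (field; lra).
  apply (Rmult_lt_reg_r (Q - Q0)); [lra|]. unfold Rdiv.
  rewrite Rmult_assoc, Rinv_l by lra. nra.
Qed.

Lemma liminf_comparison (f g : R -> R) (Q0 c N Lf Lg : R) :
  0 <= Q0 -> 0 <= N ->
  (forall Q, Q0 < Q -> f Q <= c + N * (g Q / (Q - Q0))) ->
  (forall Q, Q0 < Q -> 0 <= g Q <= Q) ->
  is_liminf_infty f Lf -> is_liminf_infty (fun q => g q / q) Lg ->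
  Lf <= c + N * Lg.
Proof.
  intros HQ0 HN Hfg Hg [Hf_low _] [_ Hg_often].
  apply le_epsilon. intros e He.
  set (eps := e / (2 * N + 1)).
  assert (Heps : 0 < eps) by (apply Rdiv_lt_0_compat; lra).
  destruct (Hf_low eps Heps) as [M HM].
  destruct (Hg_often eps Heps (Rmax M (Q0 + 1 + Q0 / eps))) as (Q & HQ & HgQ).
  pose proof (Rmax_l M (Q0 + 1 + Q0 / eps)). pose proof (Rmax_r M (Q0 + 1 + Q0 / eps)).
  assert (0 <= Q0 / eps) by (apply div_nonneg; lra).
  assert (HQQ0 : Q0 < Q) by lra.
  pose proof (HM Q ltac:(lra)). pose proof (Hfg Q HQQ0).
  pose proof (ratio_shift (g Q) Q Q0 (Hg Q HQQ0) ltac:(lra)).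
  pose proof (shift_error_small Q0 Q eps HQ0 Heps ltac:(lra)).
  assert (eps * (2 * N + 1) = e) by (unfold eps; field; lra).
  nra.
Qed.

Theorem mainTheorem7 (n d : nat) (Q0 : R) (P : nat -> R -> R)
  (Hn : (2 <= n)%nat) (Hd : (d <= n - 1)%nat)
  (HP : Roy_system n Q0 P)
  (Ldelta Lratio : R)
  (HLdelta : is_liminf_infty (avg_rate n Q0 P) Ldelta)
  (HLratio : is_liminf_infty (fun q => sumP P (n - d) q / q) Lratio) :
  Ldelta <= INR d + INR (S n) * Lratio.
Proof.
  pose proof HP as (HQ0 & _ & HS1 & _).
  apply (liminf_comparison (avg_rate n Q0 P) (sumP P (n - d)) Q0 _ _ _ _
           HQ0 (pos_INR (S n))); [| | exact HLdelta | exact HLratio].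
  - intros Q HQ. exact (avg_rate_bound n d Q0 Q P HP HQ).
  - intros Q HQ. apply (sumP_bounds n Q0 P HS1); [lra | lia].
Qed.
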